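(* Let $\alpha>0>\beta$ with $|\beta|<\alpha$, and put $\delta=\left(\frac{\alpha-\beta}{\alpha+\beta}\right)^2$, $K=\frac{2\alpha}{(\alpha+\beta)^2}$ and $\widehat{K}=\frac{\pi(\alpha+\beta)^2}{2\alpha}$. Let $\gamma>0$ and $k_1>0$. For $n\in\mathbb{N}$ and $\omega>0$ let $$F_n(\omega)=e^{-\widehat{K}n/\omega}-e^{-\delta\widehat{K}n/\omega},\qquad \phi_\omega(s)=\gamma\bigl(1+k_1\sin(2\omega s)\bigr),\qquad y_n(\omega)=e^{-\widehat{K}n/\omega}.$$ Then for every $n\in\mathbb{N}$, the pair $(s_1,\omega_1)$ (with $\omega_1>0$) solves $F_1(\omega)=\phi_\omega(s)$ if and only if $(s_n,\omega_n)=\left(\frac{s_1}{n},n\omega_1\right)$ solves $F_n(\omega)=\phi_\omega(s)$; moreover $y_n(\omega_n)=y_1(\omega_1)$. Consequently, writing $G_\omega(s,y)=\left(s-K\ln y,\; y^\delta+\gamma(1+k_1\sin(2\omega s))\right)$ for $s\in\mathbb{R}$, $y>0$, one has $G_{\omega_1}(s_1,y)=\left(s_1+\frac{\pi}{\omega_1},y\right)$ if and only if $G_{n\omega_1}\left(\frac{s_1}{n},y\right)=\left(\frac{s_1}{n}+\frac{n\pi}{n\omega_1},y\right)$, i.e. $(s_1,y)$ is a fixed point of $G_{\omega_1}$ on the cylinder $\mathbb{R}/(\pi/\omega_1)\mathbb{Z}\times(0,\infty)$ if and only if $(s_1/n,y)$ is a fixed point of $G_{n\omega_1}$ on the cylinder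 $\mathbb{R}/(\pi/(n\omega_1))\mathbb{Z}\times(0,\infty)$.
   Context: $G_\omega$ is the approximate first return map (return time $-K\ln y$, return coordinate $y$) for a system forced with frequency $\omega$; fixed points of $G_\omega$ on the cylinder correspond to frequency locked periodic solutions. The solutions of $F_n(\omega)=\phi_\omega(s)$ are exactly the pairs $(s,\omega)$ for which $(s,y_n(\omega))$ satisfies $G_\omega(s,y)=(s+n\pi/\omega,y)$. *)

From Stdlib Require Export Reals.
Open Scope R_scope.

Definition delta (a b : R) : R := ((a - b) / (a + b)) ^ 2.
Definition Kc (a b : R) : R := 2 * a / (a + b) ^ 2.
Definition Khat (a b : R) : R := PI * (a + b) ^ 2 / (2 * a).

Definition Fn (a b : R) (n : nat) (w : R) : R :=
  exp (- Khat a b * INR n / w) - exp (- delta a b * Khat a b * INR n / w).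

Definition phi (g k1 w s : R) : R := g * (1 + k1 * sin (2 * w * s)).

Definition yn (a b : R) (n : nat) (w : R) : R := exp (- Khat a b * INR n / w).

Definition G (a b g k1 w : R) (p : R * R) : R * R :=
  let (s, y) := p in
  (s - Kc a b * ln y, Rpower y (delta a b) + phi g k1 w s).

From Stdlib Require Import Reals Lra Lia.
Open Scope R_scope.

(* The data depend on (s, ω) only through ω s and n / ω, both invariant under
   (s, ω) ↦ (s / n, n ω); and the fixed-point equation of G at return time t
   splits into -K ln y = t and y^δ + φ_ω(s) = y, where the return times π / ω
   and n π / (n ω) coincide.  No hypothesis on α, β, γ, k₁ is needed. *)

Lemma exp_term_scale (c : R) (n : nat) (w : R) :
  (n <> 0)%nat -> exp (c * INR n / (INR n * w)) = exp (c * INR 1 / w).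
Proof.
  intros hn. rewrite Rdiv_mult_r_l, Rmult_1_r by now apply not_0_INR.
  reflexivity.
Qed.

Lemma Fn_scale (a b : R) (n : nat) (w : R) :
  (n <> 0)%nat -> Fn a b n (INR n * w) = Fn a b 1 w.
Proof. intros hn. unfold Fn. now rewrite !exp_term_scale. Qed.

Lemma yn_scale (a b : R) (n : nat) (w : R) :
  (n <> 0)%nat -> yn a b n (INR n * w) = yn a b 1 w.
Proof. apply exp_term_scale. Qed.

Lemma phi_scale (g k1 m w s : R) :
  m <> 0 -> phi g k1 (m * w) (s / m) = phi g k1 w s.
Proof.
  intros hm. unfold phi.
  now replace (2 * (m * w) * (s / m)) with (2 * w * s) by (field; exact hm).
Qed.

Lemma G_shift_fixedE (a b g k1 w s y t : R) :
  G a b g k1 w (s, y) = (s + t, y) <->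
  - Kc a b * ln y = t /\ Rpower y (delta a b) + phi g k1 w s = y.
Proof.
  unfold G. rewrite pair_equal_spec.
  split; intros [hs hy]; split; lra.
Qed.

Theorem proposition14 (a b g k1 : R)
  (ha : 0 < a) (hb : b < 0) (hab : Rabs b < a) (hg : 0 < g) (hk1 : 0 < k1)
  (n : nat) (hn : (1 <= n)%nat) :
  (forall s1 w1 : R, 0 < w1 ->
     (Fn a b 1 w1 = phi g k1 w1 s1 <->
      Fn a b n (INR n * w1) = phi g k1 (INR n * w1) (s1 / INR n)))
  /\ (forall w1 : R, 0 < w1 -> yn a b n (INR n * w1) = yn a b 1 w1)
  /\ (forall s1 w1 y : R, 0 < w1 -> 0 < y ->
       (G a b g k1 w1 (s1, y) = (s1 + PI / w1, y) <->
        G a b g k1 (INR n * w1) (s1 / INR n, y)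
          = (s1 / INR n + INR n * PI / (INR n * w1), y))).
Proof.
  assert (n_neq0 : (n <> 0)%nat) by lia.
  assert (INR_n_neq0 : INR n <> 0) by now apply not_0_INR.
  split; [| split].
  - intros s1 w1 _. now rewrite Fn_scale, phi_scale.
  - intros w1 _. now apply yn_scale.
  - intros s1 w1 y _ _.
    now rewrite !G_shift_fixedE, phi_scale, Rdiv_mult_l_l.
Qed.
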